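(* Let $T\in\{0,1\}$ and $\hat Y\in\{0,1\}$ be binary random variables on a common probability space, where $T$ is the treatment (intervention) variable and $\hat Y$ is the indicator outcome defined below, and suppose $\mathbb{P}(T=1)=\mathbb{P}(T=0)=\tfrac12$ and all conditional probabilities and denominators below are well defined (nonzero conditioning events). Assume $\hat Y$ is monotonic with respect to $T$. Define $$\delta_{\mathrm{ADCE}} := \mathbb{P}(\hat Y=1\mid T=1, s(T=1)) - \mathbb{P}(\hat Y=1\mid T=0, s(T=0)),$$ $$\delta_{\mathrm{PN}} := \frac{\mathbb{P}(\hat Y=0)-\mathbb{P}(\hat Y=0\mid \mathrm{do}(T=1))}{\mathbb{P}(T=0,\hat Y=0)},\qquad \delta_{\mathrm{PS}} := \frac{\mathbb{P}(\hat Y=0\mid \mathrm{do}(T=0))-\mathbb{P}(\hat Y=0)}{\mathbb{P}(T=1,\hat Y=1)},$$ and set $\alpha:=\mathbb{P}(\hat Y=1\mid T=1,s(T=1))$ and $\beta:=\mathbb{P}(\hat Y=0\mid T=0,s(T=0))$. Then $$\delta_{\mathrm{ADCE}} = \frac{\alpha}{2}\,\delta_{\mathrm{PS}} + \frac{\beta}{2}\,\delta_{\mathrm{PN}}.$$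
   Context: Setting: an input question $x$ to a language model is decomposed into a deep structure $d$ (core semantics) and a surface structure $s$ (presentation form); the model output is $Y(x)$, and $Y^{\mathrm{origin}}$ denotes the output on the unintervened input. The treatment $T$ is an intervention on the input: $T=0$ means the intervention alters the surface structure $s$ but preserves the deep structure $d$; $T=1$ means the intervention alters both $s$ and $d$. $s(T=t)$ denotes the value the surface structure takes under treatment $T=t$; it is determined by $T$ (the event $T=t$ entails the surface structure $s(T=t)$). The outcome is $\hat Y = 1$ if the model's output after intervention differs from $Y^{\mathrm{origin}}$ and $\hat Y=0$ if it equals it. There is no confounding between $T$ and $\hat Y$, so $\mathbb{P}(\hat Y=y\mid \mathrm{do}(T=t))=\mathbb{P}(\hat Y=y\mid T=t)$. Monotonicity of $\hat Y$ in $T$ is the standard condition (Tian–Pearl) under which the probability of necessity $\mathrm{PN}=\mathbb{P}(\hat Y'_{T'}\mid T,\hat Y)$ and probability of sufficiency $\mathrm{PS}$ are identified by the displayed formulas; here $\delta_{\mathrm{PN}},\delta_{\mathrm{PS}}$ are evaluated at $(T=0,\hat Y=0)$. *)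

From HB Require Import structures.
From mathcomp Require Import all_boot all_order all_algebra.
From mathcomp Require Import all_classical all_reals all_analysis.
Set Implicit Arguments. Unset Strict Implicit. Unset Printing Implicit Defensive.
Import Order.TTheory GRing.Theory Num.Theory.
Local Open Scope classical_set_scope.
Local Open Scope ring_scope.

Definition prb d (Omega : measurableType d) (R : realType)
  (P : probability Omega R) (A : set Omega) : R := fine (P A).

Definition cprb d (Omega : measurableType d) (R : realType)
  (P : probability Omega R) (A B : set Omega) : R :=
  prb P (A `&` B) / prb P B.

(* Potential outcome Yhat_t under intervention do(T = t), given the two
   counterfactual outcomes Y0 (under T=0) and Y1 (under T=1). *)
Definition po (Omega : Type) (Y0 Y1 : Omega -> bool) (t : bool) (w : Omega) : bool :=
  if t then Y1 w else Y0 w.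

(* P(Yhat = y | do(T = t)) := P(Yhat_t = y). *)
Definition doP d (Omega : measurableType d) (R : realType)
  (P : probability Omega R) (Y0 Y1 : Omega -> bool) (y t : bool) : R :=
  prb P [set w | po Y0 Y1 t w = y].

(* With no confounding, each interventional probability is a conditional
   probability given T = t, and since the event T = t already fixes the surface
   structure, conditioning on (T = t, s(T = t)) is conditioning on T = t.  With
   P(T = 1) = P(T = 0) = 1/2 every quantity is then a rational expression in the
   four cell probabilities a = P(T=1,Y=1), c = P(T=1,Y=0), b = P(T=0,Y=1),
   e = P(T=0,Y=0): the left side is 2a - 2b and the right side is a (e - c)/a +
   e (e - c)/e = 2e - 2c, which agree because a + c = b + e = 1/2. *)
From HB Require Import structures.
From mathcomp Require Import all_boot all_order all_algebra.
From mathcomp Require Import all_classical all_reals all_analysis.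
From mathcomp Require Import ring.
Set Implicit Arguments. Unset Strict Implicit. Unset Printing Implicit Defensive.
Import Order.TTheory GRing.Theory Num.Theory.
Local Open Scope classical_set_scope.
Local Open Scope ring_scope.

Section boolean_events.
Context d (Omega : measurableType d) (R : realType) (P : probability Omega R).
Implicit Types (A B : set Omega) (X Y : Omega -> bool).

Lemma prbDI A B : measurable A -> measurable B ->
  prb P A = prb P (A `\` B) + prb P (A `&` B).
Proof.
move=> mA mB; rewrite /prb (measureDI P mA mB) fineD //; apply: fin_num_measure.
- exact: measurableD.
- exact: measurableI.
Qed.

Lemma measurable_eqb X x : measurable [set w | X w] -> measurable [set w | X w = x].
Proof.
move=> mX; case: x => //.
have -> : [set w | X w = false] = ~` [set w | X w].
  by apply/seteqP; split=> w /=; case: (X w).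
exact: measurableC.
Qed.

Lemma setI_eqbC X Y x y :
  [set w | X w = x /\ Y w = y] = [set w | Y w = y /\ X w = x].
Proof. by apply/seteqP; split=> w /= []. Qed.

Lemma prb_eqb_split X Y x :
  measurable [set w | X w] -> measurable [set w | Y w] ->
  prb P [set w | X w = x] =
  prb P [set w | X w = x /\ Y w = true] + prb P [set w | X w = x /\ Y w = false].
Proof.
move=> mX mY; rewrite (prbDI (measurable_eqb x mX) mY) addrC; congr (_ + _).
by congr prb; apply/seteqP; split=> w /= [-> /negP]; [case: (Y w)|].
Qed.

Lemma cprb_eqb X Y x y :
  cprb P [set w | Y w = y] [set w | X w = x] =
  prb P [set w | X w = x /\ Y w = y] / prb P [set w | X w = x].
Proof. by rewrite /cprb setIC. Qed.

End boolean_events.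

Lemma balanced_risk_difference (R : numFieldType) (a b c e : R) :
  a + c = 1 / 2 -> b + e = 1 / 2 -> a != 0 -> e != 0 ->
  a / (1 / 2) - b / (1 / 2) =
  a / (1 / 2) / 2 * ((e / (1 / 2) - (c + e)) / a) +
  e / (1 / 2) / 2 * ((c + e - c / (1 / 2)) / e).
Proof.
move=> ac be a0 e0.
have -> : c = 1 / 2 - a by rewrite -ac; ring.
have -> : b = 1 / 2 - e by rewrite -be; ring.
by field; rewrite a0 e0.
Qed.

Theorem theorem1 (d : measure_display) (Omega : measurableType d) (R : realType)
  (P : probability Omega R)
  (T Yh Y0 Y1 : Omega -> bool) (ST : Type) (S : Omega -> ST) (s : bool -> ST)
  (mT : measurable [set w | T w]) (mYh : measurable [set w | Yh w])
  (mY0 : measurable [set w | Y0 w]) (mY1 : measurable [set w | Y1 w])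
  (mS : forall t, measurable [set w | S w = s t])
  (* the event T = t entails the surface structure s(T = t) *)
  (hs : forall w t, T w = t -> S w = s t)
  (* consistency: the observed outcome is the potential outcome of the received treatment *)
  (hcons : forall w, Yh w = po Y0 Y1 (T w) w)
  (* monotonicity (Tian--Pearl): almost surely no unit with Yhat_0 = 1 and Yhat_1 = 0 *)
  (hmono : P [set w | Y0 w && ~~ Y1 w] = 0%E)
  (* no confounding: P(Yhat = y | do(T = t)) = P(Yhat = y | T = t) *)
  (hnoconf : forall y t,
     doP P Y0 Y1 y t = cprb P [set w | Yh w = y] [set w | T w = t])
  (hT1 : prb P [set w | T w = true] = 1 / 2)
  (hT0 : prb P [set w | T w = false] = 1 / 2)
  (hden0 : prb P [set w | T w = false /\ Yh w = false] != 0)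
  (hden1 : prb P [set w | T w = true /\ Yh w = true] != 0) :
  let alpha := cprb P [set w | Yh w = true] [set w | T w = true /\ S w = s true] in
  let beta := cprb P [set w | Yh w = false] [set w | T w = false /\ S w = s false] in
  let dADCE := cprb P [set w | Yh w = true] [set w | T w = true /\ S w = s true]
             - cprb P [set w | Yh w = true] [set w | T w = false /\ S w = s false] in
  let dPN := (prb P [set w | Yh w = false] - doP P Y0 Y1 false true)
             / prb P [set w | T w = false /\ Yh w = false] in
  let dPS := (doP P Y0 Y1 false false - prb P [set w | Yh w = false])
             / prb P [set w | T w = true /\ Yh w = true] in
  dADCE = alpha / 2 * dPS + beta / 2 * dPN.
Proof.
move=> alpha beta dADCE dPN dPS.
have surface_free t : [set w | T w = t /\ S w = s t] = [set w | T w = t].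
  by apply/seteqP; split=> w /= => [[] //|Tw]; split=> //; exact: hs.
have PT t := prb_eqb_split P t mT mYh.
have PY0 := prb_eqb_split P false mYh mT; rewrite !(setI_eqbC Yh T) in PY0.
rewrite /dADCE /alpha /beta /dPN /dPS !surface_free !hnoconf !cprb_eqb hT1 hT0 PY0.
apply: balanced_risk_difference => //; [rewrite -hT1 | rewrite -hT0]; exact/esym/PT.
Qed.
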